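(* Let $Q$ be a probability measure on $(\Omega,\mathcal G_\infty)$ equivalent to $P$ such that the density process ${}^{\mathcal G}Z_t=\mathbb E[dQ/dP\mid\mathcal G_t]$ is $\mathbb F$-adapted. Then ${}^{o,Q}M={}^oM$, i.e. $\mathbb E^Q[M_t\mid\mathcal F_t]=\mathbb E^P[M_t\mid\mathcal F_t]$ a.s. for all $t\ge0$.
   Context: $B^1,B^2,B^3$ are independent standard Brownian motions on $(\Omega,\mathcal F,P)$ with $(B^1_0,B^2_0,B^3_0)=(1,0,0)$, and $M_t:=((B^1_t)^2+(B^2_t)^2+(B^3_t)^2)^{-1/2}$ is the inverse three-dimensional Bessel process. $\mathbb G$ is the (augmented) natural filtration of $(B^1,B^2,B^3)$ and $\mathbb F$ is the (augmented) natural filtration of $(B^1,B^2)$. ${}^{o,Q}M_t=\mathbb E^Q[M_t\mid\mathcal F_t]$ and ${}^oM={}^{o,P}M$. *)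

From HB Require Import structures.
From mathcomp Require Import all_boot all_order all_algebra.
From mathcomp Require Import all_classical all_reals all_analysis measurable_realfun normal_distribution.
Set Implicit Arguments. Unset Strict Implicit. Unset Printing Implicit Defensive.
Import Order.TTheory GRing.Theory Num.Theory.
Import numFieldNormedType.Exports.
Local Open Scope classical_set_scope.
Local Open Scope ring_scope.

Definition sub_measurable {d} {T : measurableType d} {R : realType}
    (H : set (set T)) (Y : T -> \bar R) : Prop :=
  forall B : set (\bar R), measurable B -> H (Y @^-1` B).

Definition is_cond_exp {d} {T : measurableType d} {R : realType}
    (mu : {measure set T -> \bar R}) (H : set (set T)) (X Y : T -> \bar R) : Prop :=
  [/\ sub_measurable H Y, (forall w, (0 <= Y w)%E) &
      forall A, H A -> (\int[mu]_(w in A) Y w = \int[mu]_(w in A) X w)%E].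

Definition sigma_upto {d} {T : measurableType d} {R : realType}
    (X : R -> T -> R) (s : R) : set (set T) :=
  <<s [set A | exists u V, [/\ 0 <= u <= s, measurable V & A = X u @^-1` V]] >>.

Definition sigma_proc {d} {T : measurableType d} {R : realType}
    (X : R -> T -> R) : set (set T) :=
  <<s [set A | exists u V, [/\ 0 <= u, measurable V & A = X u @^-1` V]] >>.

Definition is_BM {d} {T : measurableType d} {R : realType}
    (P : probability T R) (X : R -> T -> R) (x : R) : Prop :=
  [/\ (forall t, measurable_fun setT (X t)),
      {ae P, forall w, X 0 w = x},
      {ae P, forall w, {within `[0, +oo[, continuous (fun t => X t w)}} &
      forall s t, 0 <= s -> s < t ->
        (forall V, measurable V ->
           P ((fun w => (X t w - X s w)%R) @^-1` V) = normal_prob 0 (Num.sqrt (t - s)) V)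
        /\ (forall A V, sigma_upto X s A -> measurable V ->
           P (A `&` ((fun w => (X t w - X s w)%R) @^-1` V))
           = (P A * P ((fun w => (X t w - X s w)%R) @^-1` V))%E)].

Definition aug_nat_filtration {d} {T : measurableType d} {R : realType}
    (P : probability T R) (S : set (R -> T -> R)) (t : R) : set (set T) :=
  <<s [set A | (exists X u V, [/\ S X, 0 <= u <= t, measurable V & A = X u @^-1` V])
              \/ (measurable A /\ P A = 0%E)] >>.

Definition filtration_inf {d} {T : measurableType d} {R : realType}
    (G : R -> set (set T)) : set (set T) :=
  <<s \bigcup_(t in [set t : R | 0 <= t]) G t >>.

(* inverse three-dimensional Bessel process M_t = |B_t|^{-1} (with 0^-1 := 0,
   which only matters on a P-null set) *)
Definition inv_bessel3 {d} {T : measurableType d} {R : realType}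
    (B1 B2 B3 : R -> T -> R) (t : R) (w : T) : \bar R :=
  ((Num.sqrt (B1 t w ^+ 2 + B2 t w ^+ 2 + B3 t w ^+ 2))^-1)%:E.

From HB Require Import structures.
From mathcomp Require Import all_boot all_order all_algebra.
From mathcomp Require Import all_classical all_reals all_analysis measurable_realfun normal_distribution.
Import Order.TTheory GRing.Theory Num.Theory.
Import numFieldNormedType.Exports.
Local Open Scope classical_set_scope.
Local Open Scope ring_scope.
Set Implicit Arguments. Unset Strict Implicit.
Import HBNNSimple.

(* This is the abstract Bayes formula: of the Brownian and independence
   hypotheses only the G_t-measurability of M_t >= 0 is used.  For A in F_t,
   writing E for expectation under P,
     E^Q[1_A YP] = E[1_A YP D] = E[1_A YP Z_t] = E[1_A Z_t M_t]
                 = E[1_A M_t D] = E^Q[1_A M_t],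
   where the density D is replaced by Z_t = E[D | G_t] against the G_t-measurable
   factors, and M_t by YP = E[M_t | F_t] against the F_t-measurable factor
   1_A Z_t (this is where the F-adaptedness of Z is needed).  Hence YP is also
   a version of E^Q[M_t | F_t], so YP = YQ Q-a.s., and P-a.s. since P << Q. *)

Notation measurable_wrt G f :=
  (@measurable_fun _ _ (g_sigma_algebraType G) _ setT f).

Lemma measurable_inv (R : realType) : measurable_fun setT (@GRing.inv R).
Proof.
have -> : (setT : set R) = ~` [set 0] `|` [set 0] by rewrite setvU.
apply/measurable_funU => //; first exact: measurableC.
split; last exact: measurable_fun_set1.
apply: open_continuous_measurable_fun.
  apply: closed_openC; apply: accessible_closed_set1.
  by apply: hausdorff_accessible; exact: norm_hausdorff.
by move=> x; rewrite inE /= => /eqP x0; exact: inv_continuous.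
Qed.

Lemma measurable_invsqrt (R : realType) :
  measurable_fun setT (fun x : R => (Num.sqrt x)^-1).
Proof.
apply: measurableT_comp; first exact: measurable_inv.
by apply: continuous_measurable_fun; exact: sqrt_continuous.
Qed.

Section sub_sigma_algebra.
Context d (T : measurableType d).

Lemma measurable_wrtS (G1 G2 : set (set T)) d' (U : measurableType d') (f : T -> U) :
  <<s G1>> `<=` <<s G2>> -> measurable_wrt G1 f -> measurable_wrt G2 f.
Proof. by move=> G12 mf _ B mB; apply: G12; exact: (mf measurableT B mB). Qed.

Lemma measurable_wrt_measurable (G : set (set T)) d' (U : measurableType d')
    (f : T -> U) :
  <<s G>> `<=` measurable -> measurable_wrt G f -> measurable_fun setT f.
Proof. by move=> Gm mf _ B mB; rewrite setTI; apply: Gm; rewrite -[f @^-1` B]setTI; exact: mf. Qed.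

Lemma sub_measurable_wrt (R : realType) (G : set (set T)) (Y : T -> \bar R) :
  sub_measurable <<s G>> Y -> measurable_wrt G Y.
Proof. by move=> h _ B mB; rewrite setTI; exact: h. Qed.

End sub_sigma_algebra.

Local Open Scope ereal_scope.

Lemma cvgeMr_nondecreasing (R : realType) (u : nat -> R) (l c : \bar R) :
  (forall n, (0 <= u n)%R) -> nondecreasing_seq u ->
  (fun n => (u n)%:E) @ \oo --> l -> 0 <= c ->
  (fun n => (u n)%:E * c) @ \oo --> l * c.
Proof.
move=> u0 nd ul; case: c => [r| |] // _; first exact: cvgeZr.
have [[n0 un0]|nex] := pselect (exists n, (0 < u n)%R).
  have ll : (u n0)%:E <= l.
    rewrite -(cvg_lim _ ul) //; apply: lime_ge; first by apply/cvg_ex; exists l.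
    by exists n0 => // n /= n0n; rewrite lee_fin; exact: nd.
  rewrite gt0_muley; last by apply: (lt_le_trans _ ll); rewrite lte_fin.
  apply: cvg_near_cst; exists n0 => // n /= n0n.
  by rewrite gt0_muley // lte_fin; apply: (lt_le_trans un0); exact: nd.
have u00 n : u n = 0%R.
  by apply/eqP; rewrite eq_le u0 andbT leNgt; apply/negP => h; apply: nex; exists n.
have -> : l = 0.
  have e : (fun n => (u n)%:E) = cst 0 by apply/funext => n; rewrite u00.
  by rewrite e in ul; apply/esym; exact: (cvg_unique _ (@cvg_cst _ _ _ _ _) ul).
by rewrite mul0e; under eq_fun do rewrite u00 mul0e; exact: cvg_cst.
Qed.

Lemma set_lt_bigcup_gap (R : realType) (T : Type) (Y1 Y2 : T -> \bar R) :
  (forall x, 0 <= Y1 x) ->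
  [set x | Y1 x < Y2 x] `<=` \bigcup_n \bigcup_m
    ([set x | Y1 x <= n%:R%:E] `&` [set x | Y1 x + (m.+1%:R^-1)%:E <= Y2 x]).
Proof.
move=> n1 x /=; case E1: (Y1 x) => [r| |]; last by have := n1 x; rewrite E1.
- have r0 : (0 <= r)%R by have := n1 x; rewrite E1 lee_fin.
  case E2: (Y2 x) => [s| |] // rs.
  + exists (Num.truncn r).+1 => //; exists (Num.truncn ((s - r)^-1)) => //.
    rewrite /= E1 E2; split; first by rewrite lee_fin ltW // truncnS_gt.
    rewrite -EFinD lee_fin -lerBrDl; apply: ltW.
    have sr : (0 < s - r)%R by rewrite subr_gt0 -lte_fin.
    set k := Num.truncn _; rewrite -[(s - r)%R]invrK ltf_pV2 ?posrE ?invr_gt0 ?ltr0n //.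
    exact: truncnS_gt.
  + exists (Num.truncn r).+1 => //; exists 0%N => //.
    rewrite /= E1 E2; split; first by rewrite lee_fin ltW // truncnS_gt.
    exact: leey.
- by rewrite ltNge leey.
Qed.

Section integral_sub_sigma_algebra.
Context (R : realType) d (T : measurableType d) (G : set (set T)).
Hypothesis Gm : <<s G>> `<=` measurable.

Lemma integral_nnsfun_mulr (mu : {measure set T -> \bar R}) (f : T -> \bar R)
    (s : {nnsfun (g_sigma_algebraType G) >-> R}) :
  measurable_fun setT f -> (forall x, 0 <= f x) ->
  let e := finmap.enum_fset (fset_set (range (s : g_sigma_algebraType G -> R))) in
  \int[mu]_x ((s x)%:E * f x) =
  \sum_(i < size e) \int[mu]_(x in s @^-1` [set e`_i]) ((e`_i)%:E * f x).
Proof.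
move=> mf f0 e.
have sindic_ge0 (i : 'I_(size e)) x : (0 <= e`_i * \1_(s @^-1` [set e`_i]) x)%R.
  rewrite indicE; case: (boolP (x \in _)) => [|_]; last by rewrite mulr0.
  by rewrite inE /= => <-; rewrite mulr1.
have -> : (fun x => (s x)%:E * f x) =
    (fun x => \sum_(i < size e) ((e`_i * \1_(s @^-1` [set e`_i]) x)%:E * f x)).
  apply/funext => x; rewrite (fimfunEord s x) -sumEFin ge0_sume_distrl //.
  by move=> i _; rewrite lee_fin.
rewrite ge0_integral_sum //; last 2 first.
- move=> i; apply: emeasurable_funM => //; apply/measurable_EFinP.
  apply: measurable_funM => //; apply: measurable_indic.
  by apply: Gm; exact: (measurable_funPTI s (measurable_set1 _)).
- by move=> i x _; apply: mule_ge0 => //; rewrite lee_fin.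
apply: eq_bigr => i _; rewrite [RHS]integral_mkcond; apply: eq_integral => x _.
by rewrite /patch indicE; case: (boolP (x \in _)) => _; rewrite ?mulr1 ?mulr0 ?mul0e.
Qed.

(* Simple-function approximation of g reduces the claim to g = 1_A, A in <<s G>>. *)
Lemma integral_mul_eq_sigma (mu1 mu2 : {measure set T -> \bar R})
    (f1 f2 g : T -> \bar R) :
  measurable_fun setT f1 -> measurable_fun setT f2 ->
  (forall x, 0 <= f1 x) -> (forall x, 0 <= f2 x) ->
  (forall A, <<s G>> A -> \int[mu1]_(x in A) f1 x = \int[mu2]_(x in A) f2 x) ->
  measurable_wrt G g -> (forall x, 0 <= g x) ->
  \int[mu1]_x (g x * f1 x) = \int[mu2]_x (g x * f2 x).
Proof.
move=> mf1 mf2 f10 f20 hyp mg g0.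
pose h := nnsfun_approx (@measurableT _ (g_sigma_algebraType G)) mg.
have h_nd x m n : (m <= n)%N -> (h m x <= h n x)%R.
  by move=> mn; have := nd_nnsfun_approx measurableT mg mn => /lefP; apply.
have mh n : measurable_fun setT (fun x : T => (h n x)%:E).
  by apply/measurable_EFinP; apply: (measurable_wrt_measurable Gm); exact: measurable_funPT.
have integral_lim (mu : {measure set T -> \bar R}) f :
    measurable_fun setT f -> (forall x, 0 <= f x) ->
    \int[mu]_x (g x * f x) = limn (fun n => \int[mu]_x ((h n x)%:E * f x)).
  move=> mf f0; rewrite -monotone_convergence //.
  - apply: eq_integral => x _; apply/esym/cvg_lim => //.
    apply: cvgeMr_nondecreasing => // [m n|]; first exact: h_nd.
    exact: (cvg_nnsfun_approx measurableT mg (fun x _ => g0 x)).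
  - by move=> n; exact: emeasurable_funM.
  - by move=> n x _; apply: mule_ge0 => //; rewrite lee_fin; apply: fun_ge0.
  - by move=> x _ m n mn; apply: lee_wpmul2r => //; rewrite lee_fin; exact: h_nd.
rewrite (integral_lim mu1 f1) // (integral_lim mu2 f2) //; congr (limn _).
apply/funext => n.
rewrite (integral_nnsfun_mulr _ _ mf1 f10) (integral_nnsfun_mulr _ _ mf2 f20).
apply: eq_bigr => i _; set c := _`_i; set A := _ @^-1` _.
have [c0|c0] := leP 0%R c; last first.
  have -> : A = set0.
    by apply/seteqP; split => // x; rewrite /A /= => hx; move: c0; rewrite -hx ltNge fun_ge0.
  by rewrite !integral_set0.
have GA : <<s G>> (A : set T) by exact: (measurable_funPTI (h n) (measurable_set1 _)).
rewrite (ge0_integralZl _ (Gm GA) (measurable_funTS mf1)) //.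
by rewrite (ge0_integralZl _ (Gm GA) (measurable_funTS mf2)) // hyp.
Qed.

Lemma integral_density_mul (P Q : {measure set T -> \bar R}) (D g : T -> \bar R) :
  measurable_fun setT D -> (forall x, 0 <= D x) ->
  (forall A, <<s G>> A -> Q A = \int[P]_(x in A) D x) ->
  measurable_wrt G g -> (forall x, 0 <= g x) ->
  \int[Q]_x g x = \int[P]_x (g x * D x).
Proof.
move=> mD D0 QD mg g0; under eq_integral do rewrite -[g _]mule1.
apply: integral_mul_eq_sigma => // A GA.
by rewrite integral_cst ?mul1e ?QD //; exact: Gm.
Qed.

Lemma is_cond_exp_integral_mul (mu : {measure set T -> \bar R}) (X Y g : T -> \bar R) :
  measurable_fun setT X -> (forall x, 0 <= X x) -> is_cond_exp mu <<s G>> X Y ->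
  measurable_wrt G g -> (forall x, 0 <= g x) ->
  \int[mu]_x (g x * Y x) = \int[mu]_x (g x * X x).
Proof.
move=> mX X0 [mY Y0 XY] mg g0; apply: integral_mul_eq_sigma => //.
by apply: (measurable_wrt_measurable Gm); exact: sub_measurable_wrt.
Qed.

Lemma measure_integral_gap_eq0 (mu : probability T R) (Y1 Y2 : T -> \bar R)
    (E : set T) (n m : nat) :
  measurable E -> measurable_fun setT Y1 -> measurable_fun setT Y2 ->
  (forall x, 0 <= Y1 x) -> (forall x, 0 <= Y2 x) ->
  \int[mu]_(x in E) Y1 x = \int[mu]_(x in E) Y2 x ->
  (forall x, E x -> Y1 x <= n%:R%:E /\ Y1 x + (m.+1%:R^-1)%:E <= Y2 x) ->
  mu E = 0.
Proof.
move=> mE m1 m2 n1 n2 hyp hE.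
set eps : R := (m.+1%:R^-1)%R.
have eps0 : (0 < eps)%R by rewrite invr_gt0 ltr0n.
have I1le : \int[mu]_(x in E) Y1 x <= n%:R%:E * mu E.
  rewrite -integral_cst //; apply: ge0_le_integral => //.
  - exact: measurable_funTS.
  - by move=> x Ex; have [] := hE x Ex.
have I2ge : \int[mu]_(x in E) Y1 x + eps%:E * mu E <= \int[mu]_(x in E) Y2 x.
  rewrite -integral_cst // -ge0_integralD //; last 2 first.
  - exact: measurable_funTS.
  - by move=> x _; rewrite lee_fin ltW.
  apply: ge0_le_integral => //.
  - by move=> x _; apply: adde_ge0 => //; rewrite lee_fin ltW.
  - by apply: emeasurable_funD; [exact: measurable_funTS|exact: measurable_cst].
  - exact: measurable_funTS.
  - by move=> x Ex; have [] := hE x Ex.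
have fa : mu E \is a fin_num by rewrite fin_num_measure.
have I10 : 0 <= \int[mu]_(x in E) Y1 x by apply: integral_ge0.
have fI : \int[mu]_(x in E) Y1 x \is a fin_num.
  rewrite ge0_fin_numE //; apply: (le_lt_trans I1le).
  by rewrite -(fineK fa) -EFinM ltry.
have : (eps * fine (mu E) <= 0)%R.
  move: I2ge; rewrite -hyp -(fineK fa) -(fineK fI) -EFinM -EFinD lee_fin => h.
  by rewrite -(lerD2l (fine (\int[mu]_(x in E) Y1 x))) addr0.
rewrite pmulr_rle0 // => muE0.
by apply/eqP; rewrite eq_le measure_ge0 andbT -(fineK fa) lee_fin.
Qed.

Lemma integral_eq_sigma_lt_null (mu : probability T R) (Y1 Y2 : T -> \bar R) :
  measurable_wrt G Y1 -> measurable_wrt G Y2 ->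
  (forall x, 0 <= Y1 x) -> (forall x, 0 <= Y2 x) ->
  (forall A, <<s G>> A -> \int[mu]_(x in A) Y1 x = \int[mu]_(x in A) Y2 x) ->
  <<s G>> [set x | Y1 x < Y2 x] /\ mu [set x | Y1 x < Y2 x] = 0.
Proof.
move=> m1 m2 n1 n2 hyp.
have hS : <<s G>> [set x | Y1 x < Y2 x].
  have := @measurable_lte _ (g_sigma_algebraType G) R setT measurableT Y1 Y2 m1 m2.
  by rewrite setTI.
split => //.
pose E n m := [set x | Y1 x <= n%:R%:E] `&` [set x | Y1 x + (m.+1%:R^-1)%:E <= Y2 x].
have GE n m : <<s G>> (E n m).
  apply: (@measurableI _ (g_sigma_algebraType G)).
    have := @measurable_lee _ (g_sigma_algebraType G) R setT measurableT Y1
      (cst n%:R%:E) m1 (measurable_cst _).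
    by rewrite setTI.
  have := @measurable_lee _ (g_sigma_algebraType G) R setT measurableT
     (fun x => Y1 x + (m.+1%:R^-1)%:E) Y2 _ m2.
  by rewrite setTI; apply; apply: emeasurable_funD => //; exact: measurable_cst.
have E0 n m : mu (E n m) = 0.
  apply: (measure_integral_gap_eq0 (n := n) (m := m) (Gm (GE n m))
    (measurable_wrt_measurable Gm m1) (measurable_wrt_measurable Gm m2)
    n1 n2 (hyp _ (GE n m))).
  by move=> x [].
have sS : [set x | Y1 x < Y2 x] `<=` \bigcup_n \bigcup_m E n m.
  exact: set_lt_bigcup_gap.
have : mu.-negligible (\bigcup_n \bigcup_m E n m).
  apply: negligible_bigcup => n; apply: negligible_bigcup => m.
  by exists (E n m); split; [exact: (Gm (GE n m))|exact: E0|].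
move=> [A [mA A0 sA]]; apply/eqP; rewrite eq_le measure_ge0 andbT -A0.
by apply: le_measure; rewrite ?inE //; [exact: Gm|exact: subset_trans sS sA].
Qed.

Lemma integral_eq_sigma_neq_null (mu : probability T R) (Y1 Y2 : T -> \bar R) :
  measurable_wrt G Y1 -> measurable_wrt G Y2 ->
  (forall x, 0 <= Y1 x) -> (forall x, 0 <= Y2 x) ->
  (forall A, <<s G>> A -> \int[mu]_(x in A) Y1 x = \int[mu]_(x in A) Y2 x) ->
  <<s G>> [set x | Y1 x != Y2 x] /\ mu [set x | Y1 x != Y2 x] = 0.
Proof.
move=> m1 m2 n1 n2 hyp.
have [G12 null12] := integral_eq_sigma_lt_null m1 m2 n1 n2 hyp.
have [G21 null21] := integral_eq_sigma_lt_null m2 m1 n2 n1 (fun A GA => esym (hyp A GA)).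
rewrite set_neq_lt; split; first exact: (@measurableU _ (g_sigma_algebraType G)).
apply/eqP; rewrite eq_le measure_ge0 andbT.
apply: le_trans (measureU2 _ (Gm G12) (Gm G21)) _.
have -> : mu [set x | Y1 x < Y2 x] + mu [set x | Y2 x < Y1 x] = 0 + 0.
  by congr (_ + _); [exact: null12|exact: null21].
by rewrite adde0.
Qed.

Lemma is_cond_exp_neq_null (mu : probability T R) (X Y1 Y2 : T -> \bar R) :
  is_cond_exp mu <<s G>> X Y1 -> is_cond_exp mu <<s G>> X Y2 ->
  <<s G>> [set x | Y1 x != Y2 x] /\ mu [set x | Y1 x != Y2 x] = 0.
Proof.
move=> [m1 n1 XY1] [m2 n2 XY2].
apply: (integral_eq_sigma_neq_null (sub_measurable_wrt m1) (sub_measurable_wrt m2)) => //.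
by move=> A GA; rewrite XY1 // XY2.
Qed.

End integral_sub_sigma_algebra.

Lemma integral_setE_indicM (R : realType) d (T : measurableType d)
    (mu : {measure set T -> \bar R}) (A : set T) (f : T -> \bar R) :
  \int[mu]_(x in A) f x = \int[mu]_x ((\1_A x)%:E * f x).
Proof.
rewrite integral_mkcond; apply: eq_integral => x _; rewrite /patch indicE.
by case: (boolP (x \in A)) => _; rewrite ?mul1e ?mul0e.
Qed.

Lemma measurable_wrt_indicM (R : realType) d (T : measurableType d)
    (G : set (set T)) (A : set T) (Y : T -> \bar R) :
  <<s G>> A -> measurable_wrt G Y -> measurable_wrt G (fun x => (\1_A x)%:E * Y x).
Proof.
move=> GA mY; apply: emeasurable_funM => //; apply/measurable_EFinP.
exact: (@measurable_indic _ (g_sigma_algebraType G)).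
Qed.

Lemma indicM_ge0 (R : realType) T (A : set T) (Y : T -> \bar R) x :
  0 <= Y x -> 0 <= (\1_A x)%:E * Y x.
Proof. by move=> Y0; apply: mule_ge0 => //; rewrite lee_fin indicE; case: (_ \in _). Qed.

Section change_of_measure.
Context (R : realType) d (T : measurableType d) (F G I : set (set T)).
Hypotheses (FG : <<s F>> `<=` <<s G>>) (GI : <<s G>> `<=` <<s I>>)
  (Im : <<s I>> `<=` measurable).
Variables (P Q : probability T R) (D Z : T -> \bar R).
Hypotheses (Dm : sub_measurable <<s I>> D) (D0 : forall x, 0 <= D x)
  (QD : forall A, <<s I>> A -> Q A = \int[P]_(x in A) D x)
  (PZ : is_cond_exp P <<s G>> D Z) (ZF : sub_measurable <<s F>> Z).

Let Gm : <<s G>> `<=` measurable := subset_trans GI Im.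
Let Fm : <<s F>> `<=` measurable := subset_trans FG Gm.
Let mD : measurable_fun setT D :=
  measurable_wrt_measurable Im (sub_measurable_wrt Dm).

Lemma is_cond_exp_change_of_measure (M Y : T -> \bar R) :
  sub_measurable <<s G>> M -> (forall x, 0 <= M x) ->
  is_cond_exp P <<s F>> M Y -> is_cond_exp Q <<s F>> M Y.
Proof.
move=> GM M0 PY; have [FY Y0 _] := PY; split => // A FA.
have [_ Z0 _] := PZ.
have GmM := sub_measurable_wrt GM.
have FmY := sub_measurable_wrt FY.
have FmZ := sub_measurable_wrt ZF.
have mM := measurable_wrt_measurable Gm GmM.
have IA := GI (FG FA).
have Y_density : \int[Q]_(x in A) Y x = \int[P]_x ((\1_A x)%:E * Y x * Z x).
  rewrite integral_setE_indicM (integral_density_mul Im mD D0 QD); last 2 first.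
  - exact: measurable_wrt_indicM IA (measurable_wrtS (subset_trans FG GI) FmY).
  - by move=> x; exact: indicM_ge0 (Y0 x).
  symmetry; apply: (is_cond_exp_integral_mul Gm mD D0 PZ).
  - exact: measurable_wrt_indicM (FG FA) (measurable_wrtS FG FmY).
  - by move=> x; exact: indicM_ge0 (Y0 x).
have M_density : \int[Q]_(x in A) M x = \int[P]_x ((\1_A x)%:E * M x * Z x).
  rewrite integral_setE_indicM (integral_density_mul Im mD D0 QD); last 2 first.
  - exact: measurable_wrt_indicM IA (measurable_wrtS GI GmM).
  - by move=> x; exact: indicM_ge0 (M0 x).
  symmetry; apply: (is_cond_exp_integral_mul Gm mD D0 PZ).
  - exact: measurable_wrt_indicM (FG FA) GmM.
  - by move=> x; exact: indicM_ge0 (M0 x).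
rewrite Y_density M_density.
under eq_integral do rewrite muleAC; under [RHS]eq_integral do rewrite muleAC.
apply: (is_cond_exp_integral_mul Fm mM M0 PY); first exact: measurable_wrt_indicM FA FmZ.
by move=> x; exact: indicM_ge0 (Z0 x).
Qed.

Lemma cond_exp_change_of_measure_ae (M YP YQ : T -> \bar R) :
  (forall A, <<s I>> A -> Q A = 0 -> P A = 0) ->
  sub_measurable <<s G>> M -> (forall x, 0 <= M x) ->
  is_cond_exp P <<s F>> M YP -> is_cond_exp Q <<s F>> M YQ ->
  {ae P, forall x, YP x = YQ x}.
Proof.
move=> PQ GM M0 PYP QYQ.
have QYP := is_cond_exp_change_of_measure GM M0 PYP.
have [FS QS] := is_cond_exp_neq_null Fm QYP QYQ.
exists [set x | YP x != YQ x]; split; first exact: Fm.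
- exact: PQ (GI (FG FS)) QS.
- by move=> x /= /eqP.
Qed.

End change_of_measure.

Local Close Scope ereal_scope.

Section augmented_filtration.
Context (R : realType) d (T : measurableType d) (P : probability T R).

Lemma aug_nat_filtration_measurable (S : set (R -> T -> R)) t :
  (forall X u, S X -> measurable_fun setT (X u)) ->
  aug_nat_filtration P S t `<=` measurable.
Proof.
move=> mS; apply: (smallest_sub (@sigma_algebra_measurable _ T)).
move=> A [[X [u [V [SX _ mV ->]]]]|[]] //.
by rewrite -[X u @^-1` V]setTI; exact: mS.
Qed.

Lemma aug_nat_filtrationS (S1 S2 : set (R -> T -> R)) t :
  S1 `<=` S2 -> aug_nat_filtration P S1 t `<=` aug_nat_filtration P S2 t.
Proof.
move=> S12; apply: sub_sigma_algebra2 => A [[X [u [V [S1X hu mV ->]]]]|]; last by right.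
by left; exists X, u, V; split => //; exact: S12.
Qed.

Lemma filtration_inf_measurable (G : R -> set (set T)) :
  (forall t, 0 <= t -> G t `<=` measurable) -> filtration_inf G `<=` measurable.
Proof.
by move=> Gm; apply: (smallest_sub (@sigma_algebra_measurable _ T)) => A [t t0]; exact: Gm.
Qed.

Lemma sub_filtration_inf (G : R -> set (set T)) t :
  0 <= t -> G t `<=` filtration_inf G.
Proof. by move=> t0 A GA; apply: sub_sigma_algebra; exists t. Qed.

Lemma inv_bessel3_sub_measurable (S : set (R -> T -> R)) (B1 B2 B3 : R -> T -> R) t :
  S B1 -> S B2 -> S B3 -> 0 <= t ->
  sub_measurable (aug_nat_filtration P S t) (inv_bessel3 B1 B2 B3 t).
Proof.
move=> SB1 SB2 SB3 t0; rewrite /aug_nat_filtration; set G := (X in <<s X>>).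
have mB X : S X -> measurable_wrt G (X t).
  move=> SX _ W mW; rewrite setTI; apply: sub_sigma_algebra; left.
  by exists X, t, W; split => //; rewrite t0 lexx.
have mM : measurable_wrt G (inv_bessel3 B1 B2 B3 t).
  apply/measurable_EFinP; apply: (measurableT_comp (@measurable_invsqrt R)).
  by apply: measurable_funD; first apply: measurable_funD; apply: measurable_funX; exact: mB.
by move=> V mV; rewrite -[_ @^-1` V]setTI; exact: mM.
Qed.

End augmented_filtration.

Theorem mainTheorem8 (R : realType) (d : measure_display) (T : measurableType d)
  (P : probability T R) (B1 B2 B3 : R -> T -> R)
  (hB1 : is_BM P B1 1) (hB2 : is_BM P B2 0) (hB3 : is_BM P B3 0)
  (hind : forall A1 A2 A3, sigma_proc B1 A1 -> sigma_proc B2 A2 -> sigma_proc B3 A3 ->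
     P (A1 `&` A2 `&` A3) = (P A1 * P A2 * P A3)%E)
  (Q : probability T R)
  (hequiv : forall A, filtration_inf (aug_nat_filtration P [set B1; B2; B3]) A ->
     (P A = 0%E <-> Q A = 0%E))
  (D : T -> \bar R)
  (hDm : sub_measurable (filtration_inf (aug_nat_filtration P [set B1; B2; B3])) D)
  (hD0 : forall w, (0 <= D w)%E)
  (hD : forall A, filtration_inf (aug_nat_filtration P [set B1; B2; B3]) A ->
     Q A = (\int[P]_(w in A) D w)%E)
  (Z : R -> T -> \bar R)
  (hZ : forall t, 0 <= t -> is_cond_exp P (aug_nat_filtration P [set B1; B2; B3] t) D (Z t))
  (hZF : forall t, 0 <= t -> sub_measurable (aug_nat_filtration P [set B1; B2] t) (Z t)) :
  forall t, 0 <= t -> forall YP YQ : T -> \bar R,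
    is_cond_exp P (aug_nat_filtration P [set B1; B2] t) (inv_bessel3 B1 B2 B3 t) YP ->
    is_cond_exp Q (aug_nat_filtration P [set B1; B2] t) (inv_bessel3 B1 B2 B3 t) YQ ->
    {ae P, forall w, YP w = YQ w}.
Proof.
move=> t t0 YP YQ PYP QYQ.
have mB X u : [set B1; B2; B3] X -> measurable_fun setT (X u).
  by case=> [[]|] ->; [case: hB1|case: hB2|case: hB3].
have FG : aug_nat_filtration P [set B1; B2] t `<=` aug_nat_filtration P [set B1; B2; B3] t.
  by apply: aug_nat_filtrationS => X SX; left.
apply: (cond_exp_change_of_measure_ae FG
  (sub_filtration_inf (G := aug_nat_filtration P [set B1; B2; B3]) t0)
  (filtration_inf_measurable (fun s _ => aug_nat_filtration_measurable (t := s) mB))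
  hDm hD0 hD (hZ t t0) (hZF t t0) _ _ _ PYP QYQ).
- by move=> A IA; exact: (hequiv A IA).2.
- by apply: inv_bessel3_sub_measurable => //; [left; left|left; right|right].
- by move=> w; rewrite lee_fin invr_ge0 sqrtr_ge0.
Qed.
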